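(* Let $n\ge2$ and let $P(x)=a_0+a_1x+\dots+a_nx^n\in\mathbb{Z}[x]$ with $a_n\neq0$ and $\max_i|a_i|=|a_n|$. Let $Q>1$ and suppose there exist $w,\kappa,\eta\in\mathbb{R}$ with $w>0$, $-\frac w2<\eta<\frac w2$, and an interval $J$ with $|J|\gg Q^{-\frac w2-\eta}$ such that $r(P)=Q^{-\kappa}$ and $|P(x)|<|a_n|Q^{-w}$ for all $x\in J$. Then the discriminant of $P$ satisfies $$|D(P)|\ll |a_n|^{2n-2}\,Q^{-w-(n-1)(n-2)\kappa+2\eta}.$$
   Context: $r(P)$ denotes the largest distance between two (complex) roots of $P$; $D(P)$ is the discriminant of $P$. The notation $A\ll B$ means $A\le cB$ for a constant $c>0$ depending only on $n$ and on the implied constant in the hypothesis $|J|\gg Q^{-w/2-\eta}$ (not on $P$, $Q$, $w$, $\kappa$, $\eta$). *)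

From HB Require Import structures.
From mathcomp Require Import all_boot all_order all_algebra.
From mathcomp Require Import reals exp.
From mathcomp.real_closed Require Import complex.
Set Implicit Arguments. Unset Strict Implicit. Unset Printing Implicit Defensive.
Import Order.TTheory GRing.Theory Num.Theory.
Local Open Scope ring_scope.

Definition cabs {R : rcfType} (z : R[i]) : R := ComplexField.Normc.normc z.

Definition polyZ (S : nzRingType) (P : {poly int}) : {poly S} :=
  map_poly (fun z : int => z%:~R) P.

(* rs is the list of complex roots of P, counted with multiplicity:
   P = a_n * prod_(a in rs) (X - a) over C *)
Definition roots_list {R : rcfType} (P : {poly int}) (rs : seq R[i]) : Prop :=
  polyZ R[i] P = (lead_coef P)%:~R *: \prod_(a <- rs) ('X - a%:P).

Definition root_sep {R : rcfType} (rs : seq R[i]) : R :=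
  \big[Num.max/0]_(a <- rs) \big[Num.max/0]_(b <- rs) cabs (a - b).

Definition discr {R : rcfType} (P : {poly int}) (rs : seq R[i]) : R[i] :=
  (lead_coef P)%:~R ^+ (2 * (size P).-1 - 2) *
  \prod_(i < size rs) \prod_(j < size rs | (i < j)%N) (rs`_i - rs`_j) ^+ 2.

(* Trisecting J once per root yields x in J with |x - alpha_i| >= |J| / (6 3^n)
   for every root alpha_i.  Let alpha_k be the root nearest to x and
   Y = prod_(j <> k) |x - alpha_j|.  Then |J| Y <~ |x - alpha_k| Y = |P(x)| / |a_n|
   < Q^-w, so Y <~ Q^(-w/2 + eta).  Write the product in D(P) over ordered pairs
   of distinct roots: since |alpha_k - alpha_j| <= 2 |x - alpha_j|, the 2(n-1)
   pairs involving alpha_k contribute at most (2^(n-1) Y)^2, and each of the other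
   (n-1)(n-2) pairs at most r(P) = Q^-kappa. *)

From HB Require Import structures.
From mathcomp Require Import all_boot all_order all_algebra.
From mathcomp Require Import reals exp.
From mathcomp.real_closed Require Import complex.
From mathcomp Require Import ring lra zify.
Set Implicit Arguments. Unset Strict Implicit. Unset Printing Implicit Defensive.
Import Order.TTheory GRing.Theory Num.Theory.
Local Open Scope ring_scope.

Section ComplexModulus.
Variable R : rcfType.
Implicit Types z w : R[i].

Lemma cabsE z : (cabs z)%:C%C = `|z|.
Proof. by case: z. Qed.

Lemma cabs_ge0 z : 0 <= cabs z.
Proof. by rewrite -ler0c cabsE. Qed.

Lemma cabsM z w : cabs (z * w) = cabs z * cabs w.
Proof. by apply: complexI; rewrite rmorphM /= !cabsE normrM. Qed.

Lemma cabsX z k : cabs (z ^+ k) = cabs z ^+ k.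
Proof. by apply: complexI; rewrite rmorphXn /= !cabsE normrX. Qed.

Lemma cabs_prod (I : Type) (s : seq I) (P : pred I) (F : I -> R[i]) :
  cabs (\prod_(i <- s | P i) F i) = \prod_(i <- s | P i) cabs (F i).
Proof.
apply: complexI; rewrite rmorph_prod /= cabsE normr_prod.
by apply: eq_bigr => i _; rewrite cabsE.
Qed.

Lemma cabs_real (x : R) : cabs x%:C%C = `|x|.
Proof. by rewrite /cabs /= expr0n /= addr0 sqrtr_sqr. Qed.

Lemma cabs_intr (k : int) : cabs (k%:~R : R[i]) = `|k%:~R : R|.
Proof. by rewrite -cabs_real rmorph_int. Qed.

Lemma distcC z w : cabs (z - w) = cabs (w - z).
Proof. by apply: complexI; rewrite !cabsE distrC. Qed.

Lemma ler_distc u z w : cabs (z - w) <= cabs (u - z) + cabs (u - w).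
Proof.
rewrite -lecR rmorphD /= !cabsE.
by rewrite (le_trans (ler_distD u z w)) // distrC.
Qed.

Lemma ler_Re_cabs z : `|complex.Re z| <= cabs z.
Proof. by rewrite -lecR cabsE normc_ge_Re. Qed.

End ComplexModulus.

Section FarPoint.
Variable R : realFieldType.

Lemma interval_third_far_from (a b t : R) : a < b ->
  exists a' b', [/\ a <= a', b' <= b, b - a = 3 * (b' - a')
    & forall x, a' < x < b' -> b - a <= 6 * `|x - t|].
Proof.
move=> ab; have [tl|tg] := lerP t ((a + b) / 2).
- exists (a + 2 * (b - a) / 3), b; split; [lra | lra | lra |].
  by move=> x /andP[x1 _]; rewrite ger0_norm; lra.
- exists a, (a + (b - a) / 3); split; [lra | lra | lra |].
  by move=> x /andP[_ x2]; rewrite ler0_norm; lra.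
Qed.

Lemma exists_far_from_seq (ts : seq R) (a b : R) : a < b ->
  exists2 x, a < x < b &
    forall t, t \in ts -> b - a <= 6 * 3 ^+ size ts * `|x - t|.
Proof.
elim: ts a b => [|t ts IH] a b ab.
  by exists ((a + b) / 2) => [|t]; rewrite ?in_nil //; apply/andP; split; lra.
have [a' [b' [aa' bb' ab3 far_t]]] := interval_third_far_from t ab.
have [|x x_ab' far_ts] := IH a' b'; first lra.
have x_ab : a < x < b by case/andP: x_ab' => x1 x2; apply/andP; split; lra.
have pow3_ge1 : 1 <= 3 ^+ size ts :> R by rewrite exprn_ege1 //; lra.
exists x => // u; rewrite in_cons exprS /= => /orP[/eqP-> | u_ts].
- have := far_t x x_ab'; have : 0 <= `|x - t| by []; nra.
- have := far_ts u u_ts; have : 0 <= `|x - u| by []; nra.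
Qed.

End FarPoint.

Lemma card_ord_neq (m : nat) (k : 'I_m) : #|[pred j : 'I_m | k != j]| = (m - 1)%N.
Proof. by rewrite subn1 -[in RHS](card_ord m) -(cardC1 k); apply: eq_card => j; rewrite !inE eq_sym. Qed.

Lemma card_ord_neq2 (m : nat) (i k : 'I_m) : i != k ->
  #|[pred j : 'I_m | (i != j) && (j != k)]| = (m - 2)%N.
Proof.
move=> ik; have -> : #|[pred j : 'I_m | (i != j) && (j != k)]| =
                     #|[predD1 [pred j : 'I_m | i != j] & k]|.
  by apply: eq_card => j; rewrite !inE andbC.
have := cardD1 k [pred j : 'I_m | i != j]; rewrite !inE ik card_ord_neq.
by move=> h; rewrite -[2%N]/(1 + 1)%N subnDA h addKn.
Qed.

Section PairProducts.
Variables (R : realDomainType) (m : nat) (d : 'I_m -> 'I_m -> R).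
Hypothesis d_sym : forall i j, d i j = d j i.

Lemma prod_lt_pairs_sqr :
  \prod_(i < m) \prod_(j < m | (i < j)%N) d i j ^+ 2 =
  \prod_(i < m) \prod_(j < m | i != j) d i j.
Proof.
transitivity (\prod_(i < m) \prod_(j < m | (i < j)%N) d i j *
              \prod_(i < m) \prod_(j < m | (i < j)%N) d j i).
  rewrite -big_split; apply: eq_bigr => i _.
  by rewrite -big_split; apply: eq_bigr => j _; rewrite expr2 {2}d_sym.
rewrite [X in _ * X](exchange_big_dep xpredT) //= -big_split /=.
apply: eq_bigr => i _; rewrite [RHS](bigID (fun j : 'I_m => (i < j)%N)) /=.
by congr (_ * _); apply: eq_bigl => j; rewrite -val_eqE /=; lia.
Qed.

Lemma prod_lt_pairs_sqr_le (r : R) (k : 'I_m) :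
  (forall i j, 0 <= d i j) -> (forall i j, d i j <= r) ->
  \prod_(i < m) \prod_(j < m | (i < j)%N) d i j ^+ 2 <=
  (\prod_(j < m | k != j) d k j) ^+ 2 * r ^+ ((m - 1) * (m - 2)).
Proof.
move=> d_ge0 d_le.
have row_le i : i != k -> \prod_(j < m | i != j) d i j <= d k i * r ^+ (m - 2).
  move=> ik; rewrite (bigD1 k) //= d_sym ler_wpM2l //.
  rewrite -(card_ord_neq2 ik) -prodr_const.
  by apply: ler_prod => j _; rewrite d_ge0 d_le.
rewrite prod_lt_pairs_sqr (bigD1 k) //= expr2 -mulrA ler_wpM2l ?prodr_ge0 //.
apply: (le_trans (y := \prod_(i < m | i != k) (d k i * r ^+ (m - 2)))).
  by apply: ler_prod => i ik; rewrite row_le // andbT prodr_ge0.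
rewrite big_split /= prodr_const -exprM.
have -> : #|[pred i : 'I_m | i != k]| = (m - 1)%N.
  by rewrite -(card_ord_neq k); apply: eq_card => i; rewrite !inE eq_sym.
by rewrite mulnC (eq_bigl (fun j => k != j)) // => j; rewrite eq_sym.
Qed.

End PairProducts.

Section RootDistances.
Variables (R : rcfType) (rs : seq R[i]).
Local Notation m := (size rs).

Lemma cabs_sub_le_root_sep (i j : 'I_m) : cabs (rs`_i - rs`_j) <= root_sep rs.
Proof.
apply: le_trans (le_bigmax_seq 0 _ xpredT _ (mem_nth 0 (ltn_ord i)) isT).
exact: (le_bigmax_seq 0 _ xpredT (fun b => cabs (rs`_i - b)) (mem_nth 0 (ltn_ord j))).
Qed.

Lemma root_pairs_le_dist_prod (x L E : R) : (0 < m)%N -> 0 <= L ->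
  (forall i : 'I_m, L <= cabs (x%:C - rs`_i)%C) ->
  \prod_(i < m) cabs (x%:C - rs`_i)%C < E ->
  L ^+ 2 * \prod_(i < m) \prod_(j < m | (i < j)%N) cabs (rs`_i - rs`_j) ^+ 2 <=
  (2 ^+ (m - 1) * E) ^+ 2 * root_sep rs ^+ ((m - 1) * (m - 2)).
Proof.
move=> m_gt0 L_ge0 L_le prod_lt.
pose u i := cabs (x%:C - rs`_i)%C.
have [k _ k_min] := @arg_minP _ R 'I_m (Ordinal m_gt0) xpredT u isT.
pose Y := \prod_(j < m | k != j) u j.
have Y_ge0 : 0 <= Y by apply: prodr_ge0 => j _; exact: cabs_ge0.
have LY_le : L * Y <= E.
  have uY_lt : u k * Y < E.
    suff <- : \prod_(i < m) u i = u k * Y by [].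
    by rewrite (bigD1 k) //=; congr (_ * _); apply: eq_bigl => j; rewrite eq_sym.
  by apply/ltW/(le_lt_trans _ uY_lt); rewrite ler_wpM2r ?L_le.
have dist_le : \prod_(j < m | k != j) cabs (rs`_k - rs`_j) <= 2 ^+ (m - 1) * Y.
  have -> : 2 ^+ (m - 1) = \prod_(j < m | k != j) (2 : R).
    by rewrite prodr_const card_ord_neq.
  rewrite -big_split /=; apply: ler_prod => j _; rewrite cabs_ge0 mulr_natl mulr2n.
  apply: le_trans (ler_distc x%:C%C _ _) _.
  by rewrite lerD2r k_min.
have := prod_lt_pairs_sqr_le (fun i j => distcC _ _) k (fun i j => cabs_ge0 _)
  cabs_sub_le_root_sep.
move=> /(ler_wpM2l (exprn_ge0 2 L_ge0)) /le_trans -> //.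
have r_ge0 : 0 <= root_sep rs := le_trans (cabs_ge0 _) (cabs_sub_le_root_sep k k).
rewrite mulrA -exprMn ler_wpM2r ?exprn_ge0 //.
have E_ge0 : 0 <= E by apply/ltW/(le_lt_trans _ prod_lt)/prodr_ge0 => i _; exact: cabs_ge0.
have X_ge0 : 0 <= \prod_(j < m | k != j) cabs (rs`_k - rs`_j).
  by apply: prodr_ge0 => j _; exact: cabs_ge0.
rewrite ler_sqr ?nnegrE ?mulr_ge0 ?exprn_ge0 //.
apply: le_trans (_ : L * (2 ^+ (m - 1) * Y) <= _); first by rewrite ler_wpM2l.
by rewrite mulrCA ler_wpM2l ?exprn_ge0.
Qed.

End RootDistances.

Section RootsList.
Variables (R : rcfType) (P : {poly int}) (rs : seq R[i]).
Hypothesis P_roots : roots_list P rs.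
Local Notation lc := (lead_coef P).
Local Notation m := (size rs).

Lemma size_roots_list : P != 0 -> size P = m.+1.
Proof.
move=> P_neq0; have lc_neq0 : lc%:~R != 0 :> R[i] by rewrite intr_eq0 lead_coef_eq0.
rewrite -(size_map_poly_id0 lc_neq0) -/(polyZ R[i] P).
by move: P_roots; rewrite /roots_list => ->; rewrite size_scale // size_prod_XsubC.
Qed.

Lemma horner_roots_list (x : R) :
  `|(polyZ R P).[x]| = `|lc%:~R : R| * \prod_(i < m) cabs (x%:C - rs`_i)%C.
Proof.
have horner_C : ((polyZ R P).[x])%:C%C = (polyZ R[i] P).[x%:C%C].
  rewrite /polyZ -horner_map /= -map_poly_comp; congr (_.[_]).
  by apply: eq_map_poly => z /=; rewrite rmorph_int.
move: P_roots; rewrite /roots_list => P_eq.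
rewrite -[LHS]cabs_real horner_C P_eq hornerZ horner_prod cabsM cabs_intr cabs_prod.
by rewrite (big_nth 0) big_mkord; congr (_ * _); apply: eq_bigr => i _; rewrite hornerXsubC.
Qed.

Lemma cabs_discr : P != 0 ->
  cabs (discr P rs) = `|lc%:~R : R| ^+ (2 * m - 2) *
    \prod_(i < m) \prod_(j < m | (i < j)%N) cabs (rs`_i - rs`_j) ^+ 2.
Proof.
move=> P_neq0; rewrite /discr cabsM cabsX cabs_intr size_roots_list // cabs_prod.
by congr (_ * _); apply: eq_bigr => i _; rewrite cabs_prod; apply: eq_bigr => j _; rewrite cabsX.
Qed.

Lemma discr_le_small_on_interval (a b E : R) : P != 0 -> (0 < m)%N -> a < b ->
  (forall x, a < x < b -> `|(polyZ R P).[x]| < `|lc%:~R : R| * E) ->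
  (b - a) ^+ 2 * cabs (discr P rs) <=
  (2 ^+ (m - 1) * 6 * 3 ^+ m * E) ^+ 2 * `|lc%:~R : R| ^+ (2 * m - 2) *
  root_sep rs ^+ ((m - 1) * (m - 2)).
Proof.
move=> P_neq0 m_gt0 ab small.
pose K : R := 6 * 3 ^+ m.
have K_gt0 : 0 < K by rewrite mulr_gt0 ?exprn_gt0.
have lc_gt0 : 0 < `|lc%:~R : R| by rewrite normr_gt0 intr_eq0 lead_coef_eq0.
have [x x_ab far] := exists_far_from_seq (map (@complex.Re R) rs) ab.
rewrite size_map -/K in far.
pose L := (b - a) / K.
have L_ge0 : 0 <= L by rewrite divr_ge0 ?subr_ge0 ?(ltW ab) ?(ltW K_gt0).
have L_le (i : 'I_m) : L <= cabs (x%:C - rs`_i)%C.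
  rewrite ler_pdivrMr // mulrC (le_trans (far _ (map_f _ (mem_nth 0 (ltn_ord i))))) //.
  rewrite ler_wpM2l ?(ltW K_gt0) //.
  by have := ler_Re_cabs (x%:C - rs`_i)%C; case: (rs`_i).
have prod_lt : \prod_(i < m) cabs (x%:C - rs`_i)%C < E.
  by rewrite -(ltr_pM2l lc_gt0) -horner_roots_list small.
have KD_ge0 : 0 <= K ^+ 2 * `|lc%:~R : R| ^+ (2 * m - 2).
  by rewrite mulr_ge0 ?exprn_ge0 ?(ltW K_gt0) ?(ltW lc_gt0).
have := root_pairs_le_dist_prod m_gt0 L_ge0 L_le prod_lt.
move=> /(ler_wpM2l KD_ge0).
have -> : b - a = K * L by rewrite /L mulrC divfK ?gt_eqF.
rewrite cabs_discr //; set Pi := \prod_(i < m) _; set D := `|_| ^+ _.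
set rN := root_sep rs ^+ _.
have -> : (K * L) ^+ 2 * (D * Pi) = K ^+ 2 * D * (L ^+ 2 * Pi) by ring.
suff -> : (2 ^+ (m - 1) * 6 * 3 ^+ m * E) ^+ 2 * D * rN =
          K ^+ 2 * D * ((2 ^+ (m - 1) * E) ^+ 2 * rN) by [].
by rewrite /K; ring.
Qed.

End RootsList.

Theorem lemma4 (R : realType) (n : nat) (hn : (2 <= n)%N) (c : R) (hc : 0 < c) :
  exists C : R, 0 < C /\
  forall (P : {poly int}) (rs : seq R[i]) (Q w kappa eta a b : R),
    size P = n.+1 ->
    (forall i : nat, `|P`_i| <= `|lead_coef P|) ->
    roots_list P rs ->
    1 < Q ->
    0 < w -> - (w / 2) < eta -> eta < w / 2 ->
    a < b ->
    b - a >= c * powR Q (- (w / 2) - eta) ->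
    root_sep rs = powR Q (- kappa) ->
    (forall x : R, a < x < b ->
        `|(polyZ R P).[x]| < `|(lead_coef P)%:~R| * powR Q (- w)) ->
    cabs (discr P rs) <=
      C * `|(lead_coef P)%:~R : R| ^+ (2 * n - 2) *
      powR Q (- w - ((n - 1) * (n - 2))%:R * kappa + 2 * eta).
Proof.
(* The coefficient bound and the constraints on w and eta are not needed. *)
pose K : R := 2 ^+ (n - 1) * 6 * 3 ^+ n.
have K_gt0 : 0 < K by rewrite !mulr_gt0 ?exprn_gt0.
exists ((K / c) ^+ 2); split=> [|P rs Q w kappa eta a b sizeP _ P_roots Q_gt1 _ _ _ ab].
  by rewrite exprn_gt0 ?divr_gt0.
move=> ba_ge sep small; have Q_gt0 : 0 < Q by lra.
have P_neq0 : P != 0 by rewrite -size_poly_eq0 sizeP.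
have size_rs : size rs = n by apply/succn_inj; rewrite -sizeP (size_roots_list P_roots).
pose A := Q `^ (- (w / 2) - eta); pose B := Q `^ (- (w / 2) + eta).
have QAB : Q `^ (- w) = A * B.
  rewrite -powRD; last by rewrite (gt_eqF Q_gt0) implybT.
  by congr powR; lra.
have QB : Q `^ (- w - ((n - 1) * (n - 2))%:R * kappa + 2 * eta) =
          B ^+ 2 * (Q `^ (- kappa)) ^+ ((n - 1) * (n - 2)).
  rewrite -!powR_mulrn ?powR_ge0 // -!powRrM -powRD; last by rewrite (gt_eqF Q_gt0) implybT.
  by congr powR; lra.
have := discr_le_small_on_interval P_roots P_neq0 _ ab small.
rewrite size_rs sep QAB -/K; move=> /(_ (ltnW hn)) bound.
have cA_gt0 : 0 < c * A by rewrite mulr_gt0 ?powR_gt0.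
rewrite QB -(ler_pM2l (exprn_gt0 2 cA_gt0)).
apply: le_trans (le_trans _ bound) _.
  by rewrite ler_wpM2r ?cabs_ge0 // ler_sqr ?nnegrE ?(ltW cA_gt0) ?subr_ge0 ?(ltW ab).
set D := `|_| ^+ _; set rN := Q `^ (- kappa) ^+ _.
suff -> : (c * A) ^+ 2 * ((K / c) ^+ 2 * D * (B ^+ 2 * rN)) =
          (K * (A * B)) ^+ 2 * D * rN by [].
by field; exact: lt0r_neq0.
Qed.
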